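(* Assume $U_1>2U_2$, $0<\varepsilon\ll U_2$ and $U_2/\varepsilon\notin\mathbb N$. Let $(\bar\eta,\eta)$ be a move with $\bar\eta\in\mathcal B$. If $\Delta s:=s(\eta)-s(\bar\eta)\ge3$, $p_{min}(\eta)\ge4$ and $p_2(\bar\eta)\ge\ell_2^*$, then either $\eta\in\mathcal B$, or $\eta\notin\mathcal B$ and $H(\bar\eta)>\Gamma$.
   Context: Let $L\in\mathbb N$, $\Lambda=\{0,\dots,L\}^2$, $\partial^-\Lambda=\{x\in\Lambda:\exists y\notin\Lambda,\ |y-x|=1\}$, $\Lambda_0=\Lambda\setminus\partial^-\Lambda$, configurations $\eta\in\{0,1\}^\Lambda$ with energy $H(\eta)=-U_1\sum_{(x,y)\in\Lambda^*_{0,h}}\eta(x)\eta(y)-U_2\sum_{(x,y)\in\Lambda^*_{0,v}}\eta(x)\eta(y)+\Delta\sum_{x\in\Lambda}\eta(x)$, with $\Lambda^*_{0,h}$ ($\Lambda^*_{0,v}$) the horizontal (vertical) unoriented nearest-neighbour bonds inside $\Lambda_0$, $U_1,U_2,\Delta>0$. $\varepsilon=U_1+U_2-\Delta$, $\ell_2^*=\lceil U_2/\varepsilon\rceil$, $s^*=3\ell_2^*-1$, $\Gamma=U_1\ell_2^*+2U_2\ell_2^*+U_1-U_2-2\varepsilon(\ell_2^* )^2+3\varepsilon\ell_2^*-2\varepsilon$. A move is a pair $(\bar\eta,\eta)$ with $\eta\ne\bar\eta$ obtained from $\bar\eta$ by exchanging the values at two nearest-neighbour sites of $\Lambda$, or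 by setting the value at some site of $\partial^-\Lambda$ to $0$, or setting it to $1$. Geometry: a free particle is an occupied site in $\partial^-\Lambda$ or an occupied site of $\Lambda_0$ with no occupied nearest neighbour in $\Lambda_0$; $n(\eta)$ is the number of free particles; $\eta_{cl}$ is the set of occupied sites of $\Lambda_0$ that are not free. $C(\eta_{cl})$ is the union of closed unit squares centred at sites of $\eta_{cl}$; $p_1$ ($p_2$) is the number of columns (rows) of $\mathbb Z^2$ meeting $C(\eta_{cl})$; $s=p_1+p_2$; $v=p_1p_2-|\eta_{cl}|$; $p_{min}=\min\{p_1,p_2\}$, $p_{max}=\max\{p_1,p_2\}$. $\mathcal B$ is the set of $\eta$ such that: $s(\eta)\le s^*-2$; or $s(\eta)\ge s^*-1$ and $p_2(\eta)\le\ell_2^*-1$; or $s(\eta)=s^*-1$, $p_2(\eta)\ge\ell_2^*$ and $v(\eta)\ge p_{min}(\eta)-1$; or $s(\eta)\ge s^*$, $p_2(\eta)=\ell_2^*$ and $v(\eta)\ge p_{max}(\eta)-1$. *)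

From HB Require Import structures.
From mathcomp Require Import all_boot all_order all_algebra.
From mathcomp Require Import reals.
Set Implicit Arguments. Unset Strict Implicit. Unset Printing Implicit Defensive.
Import Order.TTheory GRing.Theory Num.Theory.
Local Open Scope ring_scope.

(* Lambda = {0..L}^2 ; a site is a pair (x.1, x.2) = (column index, row index). *)
Definition site (L : nat) : finType := ('I_L.+1 * 'I_L.+1)%type.
Definition config (L : nat) := {ffun site L -> bool}.

(* internal boundary: sites with a nearest neighbour of Z^2 outside Lambda *)
Definition boundary (L : nat) (x : site L) : bool :=
  [|| (x.1 : nat) == 0%N, (x.1 : nat) == L, (x.2 : nat) == 0%N | (x.2 : nat) == L].
Definition interior (L : nat) (x : site L) : bool := ~~ boundary x.

Definition hstep (L : nat) (x y : site L) : bool :=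
  ((x.2 : nat) == y.2) && ((x.1 : nat).+1 == y.1).
Definition vstep (L : nat) (x y : site L) : bool :=
  ((x.1 : nat) == y.1) && ((x.2 : nat).+1 == y.2).
Definition nbr (L : nat) (x y : site L) : bool :=
  [|| hstep x y, hstep y x, vstep x y | vstep y x].

(* energy: each unoriented bond of Lambda_0 counted once via its oriented representative *)
Definition energy (R : realType) (U1 U2 Delta : R) (L : nat) (eta : config L) : R :=
  - U1 * (\sum_(p : site L * site L | [&& hstep p.1 p.2, interior p.1 & interior p.2])
            (eta p.1 && eta p.2)%:R)
  - U2 * (\sum_(p : site L * site L | [&& vstep p.1 p.2, interior p.1 & interior p.2])
            (eta p.1 && eta p.2)%:R)
  + Delta * (\sum_(x : site L) (eta x)%:R).

Definition swap_conf (L : nat) (eta : config L) (x y : site L) : config L :=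
  [ffun z => if z == x then eta y else if z == y then eta x else eta z].
Definition set_conf (L : nat) (eta : config L) (x : site L) (b : bool) : config L :=
  [ffun z => if z == x then b else eta z].
Definition move (L : nat) (etab eta : config L) : Prop :=
  eta <> etab /\
  ((exists x y : site L, nbr x y /\ eta = swap_conf etab x y) \/
   (exists x : site L, boundary x /\ (eta = set_conf etab x false \/ eta = set_conf etab x true))).

Definition free (L : nat) (eta : config L) (x : site L) : bool :=
  eta x && (boundary x || (interior x && [forall y, ~~ [&& nbr x y, interior y & eta y]])).
Definition cl (L : nat) (eta : config L) : {set site L} :=
  [set x | [&& eta x, interior x & ~~ free eta x]].
(* number of columns / rows met by C(eta_cl) = size of horizontal / vertical projections *)
Definition p1 (L : nat) (eta : config L) : nat := #|[set x.1 | x in cl eta]|.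
Definition p2 (L : nat) (eta : config L) : nat := #|[set x.2 | x in cl eta]|.
Definition sz (L : nat) (eta : config L) : nat := (p1 eta + p2 eta)%N.
Definition vv (L : nat) (eta : config L) : int := (p1 eta * p2 eta)%:Z - (#|cl eta|)%:Z.
Definition pmin (L : nat) (eta : config L) : nat := minn (p1 eta) (p2 eta).
Definition pmax (L : nat) (eta : config L) : nat := maxn (p1 eta) (p2 eta).

Definition epsilon (R : realType) (U1 U2 Delta : R) : R := U1 + U2 - Delta.
Definition ell2 (R : realType) (U1 U2 Delta : R) : int := Num.ceil (U2 / epsilon U1 U2 Delta).
Definition sstar (R : realType) (U1 U2 Delta : R) : int := 3 * ell2 U1 U2 Delta - 1.
Definition Gamma (R : realType) (U1 U2 Delta : R) : R :=
  let l : R := (ell2 U1 U2 Delta)%:~R in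
  let e := epsilon U1 U2 Delta in
  U1 * l + 2 * U2 * l + U1 - U2 - 2 * e * l ^+ 2 + 3 * e * l - 2 * e.

Definition inB (R : realType) (U1 U2 Delta : R) (L : nat) (eta : config L) : bool :=
  let l := ell2 U1 U2 Delta in
  let ss := sstar U1 U2 Delta in
  let s : int := (sz eta)%:Z in
  let q2 : int := (p2 eta)%:Z in
  [|| s <= ss - 2,
      (ss - 1 <= s) && (q2 <= l - 1),
      [&& s == ss - 1, l <= q2 & (pmin eta)%:Z - 1 <= vv eta]
    | [&& ss <= s, q2 == l & (pmax eta)%:Z - 1 <= vv eta]].

(* If the move raises s by at least 3, the starting configuration must carry two
   free particles: swapping x into its neighbour y only adds y (aligned with x in
   the cluster) and particles that were free and become attached to y, while
   creating or annihilating a boundary particle cannot enlarge the cluster.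
   Counting bonds line by line gives at most |eta_cl| - p2 horizontal and
   |eta_cl| - p1 vertical bonds, so with two extra particles
   H(etab) >= U1 p2 + U2 p1 - eps |eta_cl| + 2 Delta.  Since etab is in B with
   p2 >= l2*, either s <= s* - 2, or p2 = l2*, s >= s* and v >= p_max - 1; in both
   cases the bound exceeds Gamma by quadratic inequalities that only use
   eps (l2* - 1) < U2 <= eps l2*. *)

From Pilot Require Import Defs.
From HB Require Import structures.
From mathcomp Require Import all_boot all_order all_algebra.
From mathcomp Require Import reals lra zify.
Set Implicit Arguments. Unset Strict Implicit. Unset Printing Implicit Defensive.
Import Order.TTheory GRing.Theory Num.Theory.
Local Open Scope ring_scope.

Section Semiperimeter.
Variables T U : finType.
Implicit Types (A B : {set T * U}) (x y : T * U).

Definition semiperimeter A : nat :=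
  (#|[set a.1 | a in A]| + #|[set a.2 | a in A]|)%N.

Lemma semiperimeterS A B : A \subset B -> (semiperimeter A <= semiperimeter B)%N.
Proof. by move=> AB; rewrite leq_add // subset_leq_card // imsetS. Qed.

Lemma semiperimeterU1 A y : (semiperimeter (y |: A) <= (semiperimeter A).+2)%N.
Proof.
rewrite /semiperimeter !imsetU1 !cardsU1 addnACA -add2n leq_add2r.
exact: leq_add (leq_b1 _) (leq_b1 _).
Qed.

Lemma semiperimeterU1_aligned A x y :
  x \in A -> x.1 = y.1 \/ x.2 = y.2 -> (semiperimeter (y |: A) <= (semiperimeter A).+1)%N.
Proof.
move=> xA [e1 | e2]; rewrite /semiperimeter !imsetU1 !cardsU1.
- have -> : y.1 \in [set a.1 | a in A] by rewrite -e1 imset_f.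
  by rewrite /= add0n addnCA -add1n leq_add2r leq_b1.
- have -> : y.2 \in [set a.2 | a in A] by rewrite -e2 imset_f.
  by rewrite /= add0n -addnA -add1n leq_add2r leq_b1.
Qed.

End Semiperimeter.

Lemma sz_semiperimeter L (e : config L) : sz e = semiperimeter (cl e).
Proof. by []. Qed.

Definition bonds (T : finType) (link : rel T) (C : {set T}) : {set T * T} :=
  [set p | [&& link p.1 p.2, p.1 \in C & p.2 \in C]].

(* Bond sources are distinct, and the last point of each line is not a source. *)
Lemma card_bonds_add_lines_le (T K : finType) (C : {set T}) (link : rel T)
    (line : T -> K) (pos : T -> nat) :
  (forall a b, link a b -> line a = line b /\ pos b = (pos a).+1) ->
  (forall a b b', link a b -> link a b' -> b = b') ->
  (#|bonds link C| + #|line @: C| <= #|C|)%N.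
Proof.
move=> link_line link_fun.
set P := bonds link C; set A := [set p.1 | p in P].
have cardA : #|A| = #|P|.
  apply: card_in_imset => -[a b] [a' b']; rewrite !inE /=.
  move=> /and3P [ab _ _] /and3P [ab' _ _] eq_a; subst a'.
  by rewrite (link_fun _ _ _ ab ab').
have AC : A \subset C.
  by apply/subsetP => a /imsetP [[a' b]]; rewrite inE => /and3P [_ aC _] ->.
have lines_last : line @: C \subset line @: (C :\: A).
  apply/subsetP => l /imsetP [c cC ->].
  pose on_line : pred T := fun z => (z \in C) && (line z == line c).
  have c_on_line : on_line c by rewrite /on_line cC eqxx.
  have [m /andP [mC /eqP line_m] m_max] := arg_maxnP pos c_on_line.
  apply/imsetP; exists m; last by rewrite line_m.
  rewrite !inE mC andbT; apply/imsetP => -[[a b]]; rewrite inE /= => /and3P [mb _ bC] am.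
  subst a; have [line_b pos_b] := link_line _ _ mb.
  have := m_max b; rewrite /on_line bC -line_b line_m eqxx pos_b => /(_ isT) /=.
  by rewrite ltnn.
have := leq_trans (subset_leq_card lines_last) (leq_imset_card line _).
by rewrite cardsDS // cardA leq_subRL // (leq_trans _ (subset_leq_card AC)) ?cardA.
Qed.

Lemma card_hbonds_add_p2 L (e : config L) :
  (#|bonds (@hstep L) (cl e)| + p2 e <= #|cl e|)%N.
Proof.
apply: (@card_bonds_add_lines_le _ _ _ _ snd (fun x => val x.1)).
  by move=> a b /andP [/eqP h1 /eqP h2]; split => //; apply: val_inj.
move=> [a1 a2] [b1 b2] [b1' b2'] /andP [/= /eqP h1 /eqP h2] /andP [/= /eqP h3 /eqP h4].
by congr pair; apply: val_inj; rewrite /= -?h1 -?h2 -?h3 -?h4.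
Qed.

Lemma card_vbonds_add_p1 L (e : config L) :
  (#|bonds (@vstep L) (cl e)| + p1 e <= #|cl e|)%N.
Proof.
apply: (@card_bonds_add_lines_le _ _ _ _ fst (fun x => val x.2)).
  by move=> a b /andP [/eqP h1 /eqP h2]; split => //; apply: val_inj.
move=> [a1 a2] [b1 b2] [b1' b2'] /andP [/= /eqP h1 /eqP h2] /andP [/= /eqP h3 /eqP h4].
by congr pair; apply: val_inj; rewrite /= -?h1 -?h2 -?h3 -?h4.
Qed.

Lemma card_cl_le L (e : config L) : (#|cl e| <= p1 e * p2 e)%N.
Proof.
rewrite /p1 /p2 -cardsX; apply/subset_leq_card/subsetP => -[a b] ab.
by rewrite in_setX; apply/andP; split; apply/imsetP; exists (a, b).
Qed.

Lemma nbr_sym L (x y : site L) : nbr x y = nbr y x.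
Proof.
by rewrite /nbr; case: (hstep x y) (hstep y x) (vstep x y) (vstep y x) => [] [] [] [].
Qed.

Lemma nbr_aligned L (x y : site L) : nbr x y -> x.1 = y.1 \/ x.2 = y.2.
Proof.
by case/or4P => /andP [/eqP xy _]; [right | right | left | left]; apply: val_inj.
Qed.

Lemma in_cl L (e : config L) x :
  (x \in cl e) = [&& e x, interior x & [exists y, [&& nbr x y, interior y & e y]]].
Proof.
rewrite inE /Defs.free /interior; case: (e x) (boundary x) => [] [] //=.
by rewrite negb_forall; apply: eq_existsb => y; rewrite negbK.
Qed.

Definition occupied L (e : config L) : {set site L} := [set x | e x].

Lemma sum_bonds_occupied (R : pzSemiRingType) L (e : config L) (link : rel (site L)) :
  (forall a b, link a b -> nbr a b) ->
  \sum_(p : site L * site L | [&& link p.1 p.2, interior p.1 & interior p.2])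
     ((e p.1 && e p.2)%:R : R)
  = #|bonds link (cl e)|%:R.
Proof.
move=> link_nbr; rewrite -natr_sum; congr _%:R.
rewrite (eq_bigr (fun p => if e p.1 && e p.2 then 1%N else 0%N)); last first.
  by move=> p _; case: (_ && _).
rewrite -big_mkcondr sum1dep_card; apply: eq_card => -[a b].
rewrite [RHS]in_set [LHS]in_set /= !in_cl.
apply/andP/idP => [[/and3P [ab ia ib] /andP [ea eb]] | ].
  rewrite ab ea eb ia ib /=; apply/andP; split; apply/existsP.
    by exists b; rewrite link_nbr ?ib.
  by exists a; rewrite nbr_sym link_nbr ?ia.
by case/and3P => ab /and3P [-> -> _] /and3P [-> -> _]; rewrite ab.
Qed.

Lemma energyE (R : realType) (U1 U2 Delta : R) L (e : config L) :
  energy U1 U2 Delta e = - U1 * #|bonds (@hstep L) (cl e)|%:R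
    - U2 * #|bonds (@vstep L) (cl e)|%:R + Delta * #|occupied e|%:R.
Proof.
have h_nbr (a b : site L) : hstep a b -> nbr a b by move=> ab; rewrite /nbr ab.
have v_nbr (a b : site L) : vstep a b -> nbr a b by move=> ab; rewrite /nbr ab !orbT.
rewrite /energy (@sum_bonds_occupied _ _ e _ h_nbr) (@sum_bonds_occupied _ _ e _ v_nbr).
congr (_ + Delta * _); rewrite -natr_sum -sum1dep_card; congr _%:R.
by rewrite [RHS]big_mkcond; apply: eq_bigr => x _; case: (e x).
Qed.

Lemma energy_ge (R : realType) (U1 U2 Delta : R) L (e : config L) :
  0 <= U1 -> 0 <= U2 -> 0 <= Delta -> (#|cl e| + 2 <= #|occupied e|)%N ->
  U1 * (p2 e)%:R + U2 * (p1 e)%:R - epsilon U1 U2 Delta * #|cl e|%:R + 2 * Delta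
  <= energy U1 U2 Delta e.
Proof.
move=> U1_ge0 U2_ge0 Delta_ge0 cl_occ; rewrite energyE /epsilon.
have hb : U1 * (#|bonds (@hstep L) (cl e)| + p2 e)%:R <= U1 * #|cl e|%:R.
  by rewrite ler_wpM2l // ler_nat card_hbonds_add_p2.
have vb : U2 * (#|bonds (@vstep L) (cl e)| + p1 e)%:R <= U2 * #|cl e|%:R.
  by rewrite ler_wpM2l // ler_nat card_vbonds_add_p1.
have ob : Delta * (#|cl e| + 2)%:R <= Delta * #|occupied e|%:R.
  by rewrite ler_wpM2l // ler_nat.
rewrite !natrD in hb vb ob; nra.
Qed.

(* The occupied sites outside [cl e] are the free particles, so this says n(e) >= 2. *)
Definition two_free L (e : config L) :=
  exists u w, [/\ u != w, e u, e w, u \notin cl e & w \notin cl e].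

Lemma two_free_card L (e : config L) : two_free e -> (#|cl e| + 2 <= #|occupied e|)%N.
Proof.
case=> u [w [uw eu ew ucl wcl]].
have sub : u |: (w |: cl e) \subset occupied e.
  apply/subsetP => z; rewrite !in_setU1.
  by case/or3P => [/eqP -> | /eqP -> |]; rewrite ?in_cl inE // => /andP [].
apply: leq_trans (subset_leq_card sub).
by rewrite !cardsU1 in_setU1 negb_or uw ucl wcl addnC.
Qed.

Lemma swap_confC L (e : config L) x y : swap_conf e x y = swap_conf e y x.
Proof.
apply/ffunP => z; rewrite !ffunE.
by case: (eqVneq z x) => [-> | //]; case: eqVneq => [-> |].
Qed.

Lemma swap_conf_id L (e : config L) x y : e x = e y -> swap_conf e x y = e.
Proof.
move=> exy; apply/ffunP => z; rewrite ffunE.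
by case: eqVneq => [-> // | _]; case: eqVneq => [-> |].
Qed.

Lemma cl_set_conf_boundary L (e : config L) x b :
  boundary x -> cl (set_conf e x b) \subset cl e.
Proof.
move=> bx; have off v : interior v -> set_conf e x b v = e v.
  by move=> iv; rewrite ffunE; case: eqVneq iv => [-> | //]; rewrite /interior bx.
apply/subsetP => z; rewrite !in_cl => /and3P [ez iz /existsP [w /and3P [zw iw ew]]].
by rewrite -off // ez iz; apply/existsP; exists w; rewrite zw iw -off.
Qed.

Section SwapMove.
Variables (L : nat) (e0 : config L) (x y : site L).
Hypotheses (xy : nbr x y) (e0x : e0 x) (e0y : e0 y = false).
Let e := swap_conf e0 x y.

Lemma swap_conf_new_cl z :
  z \in cl e -> z \notin cl e0 -> z != y ->
  [/\ e0 z, z != x & y.1 = z.1 \/ y.2 = z.2].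
Proof.
have off v : v != x -> v != y -> e v = e0 v.
  by move=> vx vy; rewrite ffunE (negbTE vx) (negbTE vy).
have ex : e x = false by rewrite ffunE eqxx.
rewrite !in_cl => /and3P [ez iz /existsP [w /and3P [zw iw ew]]] z_new zy.
have zx : z != x by apply: contraTneq ez => ->; rewrite ex.
have e0z : e0 z by rewrite -off.
split => //; have [wy | wy] := eqVneq w y.
  by subst w; apply: nbr_aligned; rewrite nbr_sym.
have [wx | wx] := eqVneq w x; first by rewrite wx ex in ew.
move: z_new; rewrite e0z iz /= => /existsPn /(_ w).
by rewrite zw iw -off // ew.
Qed.

Lemma sz_swap_conf : (sz e <= (sz e0).+2)%N \/ two_free e0.
Proof.
rewrite !sz_semiperimeter.
have [sub | /subsetPn [z zcl]] := boolP (cl e \subset y |: cl e0).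
  by left; apply: leq_trans (semiperimeterS sub) (semiperimeterU1 _ _).
rewrite in_setU1 negb_or => /andP [zy z_new].
have [e0z zx yz] := swap_conf_new_cl zcl z_new zy.
have [x_cl | x_free] := boolP (x \in cl e0); last by right; exists x, z; rewrite eq_sym.
have [sub | /subsetPn [z' z'cl]] := boolP (cl e \subset z |: (y |: cl e0)).
  left; apply: leq_trans (semiperimeterS sub) _.
  apply: leq_trans (semiperimeterU1_aligned (setU11 y _) yz) _.
  by rewrite ltnS; apply: semiperimeterU1_aligned x_cl (nbr_aligned xy).
rewrite !in_setU1 !negb_or => /and3P [z'z z'y z'_new].
have [e0z' _ _] := swap_conf_new_cl z'cl z'_new z'y.
by right; exists z, z'; rewrite eq_sym.
Qed.

End SwapMove.

Lemma move_sz_le_or_two_free L (e0 e : config L) :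
  move e0 e -> (sz e <= (sz e0).+2)%N \/ two_free e0.
Proof.
case=> ne [[x [y [xy eE]]] | [x [bx set_x]]].
  subst e; case Ex: (e0 x); case Ey: (e0 y);
    try by case: ne; rewrite swap_conf_id ?Ex ?Ey.
    by apply: sz_swap_conf.
  by rewrite swap_confC; apply: sz_swap_conf; rewrite // nbr_sym.
left; have sub : cl e \subset cl e0 by case: set_x => ->; apply: cl_set_conf_boundary.
by rewrite !sz_semiperimeter; apply/leqW/leqW/semiperimeterS.
Qed.

(* The right-hand sides are the bound of [energy_ge] with Delta = U1 + U2 - e,
   in the two cases left by [inB_p2_ge_cases]. *)
Lemma Gamma_lt_small_perimeter (R : realType) (U1 U2 e l a b N : R) :
  2 * U2 < U1 -> 0 < e -> e < U2 -> U2 <= e * l -> e * (l - 1) < U2 ->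
  l <= b -> a + b <= 3 * l - 2 -> N <= a * b ->
  U1 * l + 2 * U2 * l + U1 - U2 - 2 * e * l ^+ 2 + 3 * e * l - 2 * e
  < U1 * b + U2 * a - e * N + 2 * (U1 + U2 - e).
Proof.
move=> U1_gt e_gt0 e_lt l_ge l_lt lb ab Nab.
have eN : e * N <= e * (a * b) by rewrite ler_pM2l.
have P1 : 0 <= (3 * l - 2 - b - a) * (e * b - U2).
  have eb : e * l <= e * b by rewrite ler_pM2l.
  by apply: mulr_ge0; lra.
have P2 : 0 <= (b - l) * (U2 - e * (l - 2)) by apply: mulr_ge0; lra.
have P3 : 0 <= e * ((b - l) * (b - l)).
  by apply: mulr_ge0; [exact: ltW | rewrite -expr2 sqr_ge0].
have P4 : 0 <= (b - l) * (U1 - 2 * U2) by apply: mulr_ge0; lra.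
rewrite expr2; nra.
Qed.

Lemma Gamma_lt_flat (R : realType) (U1 U2 e l a N : R) :
  2 * U2 < U1 -> 0 < e -> e < U2 -> e * (l - 1) < U2 ->
  3 * l - 1 <= a + l -> N + a <= a * l + 1 ->
  U1 * l + 2 * U2 * l + U1 - U2 - 2 * e * l ^+ 2 + 3 * e * l - 2 * e
  < U1 * l + U2 * a - e * N + 2 * (U1 + U2 - e).
Proof.
move=> U1_gt e_gt0 e_lt l_lt al Na.
have eN : e * (N + a) <= e * (a * l + 1) by rewrite ler_pM2l.
have P1 : 0 <= (a - (2 * l - 1)) * (U2 - e * (l - 1)) by apply: mulr_ge0; lra.
rewrite expr2; nra.
Qed.

Lemma ell2_bounds (R : realType) (U1 U2 Delta : R) : 0 < epsilon U1 U2 Delta ->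
  let l := (ell2 U1 U2 Delta)%:~R in
  U2 <= epsilon U1 U2 Delta * l /\ epsilon U1 U2 Delta * (l - 1) < U2.
Proof.
move=> e_gt0 /=; rewrite /ell2; split.
  by rewrite -ler_pdivrMl // mulrC ceil_ge.
have := ceilB1_lt (U2 / epsilon U1 U2 Delta).
by rewrite intrB mulr1z -ltr_pdivlMl // mulrC.
Qed.

Lemma inB_p2_ge_cases (R : realType) (U1 U2 Delta : R) L (e : config L) :
  let l := ell2 U1 U2 Delta in
  inB U1 U2 Delta e -> l <= (p2 e)%:Z ->
  (p1 e + p2 e)%:Z <= 3 * l - 2 \/
  [/\ (p2 e)%:Z = l, 3 * l - 1 <= (p1 e + p2 e)%:Z
    & (#|cl e| + p1 e <= p1 e * p2 e + 1)%N].
Proof.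
rewrite /= /inB /sstar /vv /pmax /sz; move: (pmin e) => pm.
move: (ell2 U1 U2 Delta) (p1 e) (p2 e) #|cl e| => l a b N.
case/or4P => [? ? | /andP [_ ?] ? | /and3P [/eqP ? _ _] _ | /and3P [? /eqP ? ?] _].
- by left; lia.
- by lia.
- by left; lia.
- by right; split; lia.
Qed.

Theorem proposition4p3 (R : realType) (U1 U2 : R) :
  0 < U2 -> 2 * U2 < U1 ->
  exists eps0 : R, 0 < eps0 /\
  forall Delta : R, 0 < Delta ->
    0 < epsilon U1 U2 Delta -> epsilon U1 U2 Delta < eps0 ->
    (forall n : nat, U2 / epsilon U1 U2 Delta != n%:R) ->
  forall (L : nat) (etab eta : config L),
    move etab eta ->
    inB U1 U2 Delta etab ->
    (3 <= (sz eta)%:Z - (sz etab)%:Z)%R ->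
    (4 <= pmin eta)%N ->
    ell2 U1 U2 Delta <= (p2 etab)%:Z ->
    inB U1 U2 Delta eta \/
    (~~ inB U1 U2 Delta eta /\ Gamma U1 U2 Delta < energy U1 U2 Delta etab).
Proof.
move=> U2_gt0 U1_gt; exists U2; split => // Delta Delta_gt0 e_gt0 e_lt _ L etab eta.
move=> mv etab_B ds _ p2_ge.
have [| eta_nB] := boolP (inB U1 U2 Delta eta); [by left | right; split => //].
have free2 : two_free etab by case: (move_sz_le_or_two_free mv) => // ?; lia.
have U1_ge0 : 0 <= U1 by lra.
apply: lt_le_trans (energy_ge U1_ge0 (ltW U2_gt0) (ltW Delta_gt0) (two_free_card free2)).
have [l_ge l_lt] := ell2_bounds e_gt0.
have -> : 2 * Delta = 2 * (U1 + U2 - epsilon U1 U2 Delta) by rewrite /epsilon; lra.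
have N_le : (#|cl etab|%:R : R) <= (p1 etab)%:R * (p2 etab)%:R.
  by rewrite -natrM ler_nat card_cl_le.
rewrite /Gamma; case: (inB_p2_ge_cases etab_B p2_ge) => [small | [p2E s_ge v_le]].
- apply: Gamma_lt_small_perimeter => //; first by rewrite pmulrn ler_int.
  by move: small; rewrite -(ler_int R) intrB intrM -!pmulrn !natrD; lra.
- have p2R : (p2 etab)%:R = (ell2 U1 U2 Delta)%:~R :> R by rewrite -p2E pmulrn.
  rewrite p2R; apply: Gamma_lt_flat => //.
    by move: s_ge; rewrite -(ler_int R) intrB intrM -!pmulrn !natrD p2R; lra.
  by move: v_le; rewrite -(ler_nat R) !natrD natrM p2R.
Qed.
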